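(* Let $K$ be a finite field of characteristic $p$ and order $q$, let $s$ be a positive integer with $\gcd(s,q-1)=1$, let $k$ be a positive integer and $t=(t_1,\dots,t_k)\in(K^\times)^k$. Then in the group algebra $L[K^\times]$, $$W^{[t]}=W\,V^{[t]},$$ where $W=\sum_{u\in K^\times}W_u[u]$, $W^{[t]}=\sum_{u\in K^\times}W_{t_1u}\cdots W_{t_ku}[u]$ and $V^{[t]}=\sum_{u\in K^\times}(Q^t_{1,u}-Q^t_{1,0})[u]$.
   Context: $\zeta=\exp(2\pi i/p)$, $\psi(x)=\zeta^{\mathrm{Tr}(x)}$ with $\mathrm{Tr}$ the absolute trace of $K$ to $\mathbb{F}_p$; $W_u=\sum_{x\in K}\psi(x^s-ux)$. $L=\mathbb{Q}(\zeta,\xi)$ with $\xi=\exp(2\pi i/(q-1))$, and $L[K^\times]$ is the group algebra of $K^\times$ over $L$, elements written $\sum_u S_u[u]$. Let $1/s$ denote the inverse of $s$ modulo $q-1$. For $a,b\in K$, $Q^t_{a,b}$ is the number of $v=(v_1,\dots,v_k)\in K^k$ with $t_1v_1+\cdots+t_kv_k=a$ and $(v_1^s+\cdots+v_k^s)^{1/s}=b$. *)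

(* Coefficients in algC (algebraic complex numbers), which
   contains L = Q(zeta, xi). *)
From HB Require Import structures.
From mathcomp Require Import all_boot all_order all_algebra all_fingroup all_field.
Set Implicit Arguments. Unset Strict Implicit. Unset Printing Implicit Defensive.
Import Order.TTheory GRing.Theory Num.Theory.
Local Open Scope ring_scope.

Section Defs.
Variables (K : finFieldType) (p : nat).

(* zeta = exp(2 pi i / p): p.-root (-1) is exp(i pi / p) (minimal argument). *)
Definition zeta : algC := (p.-root (-1)) ^+ 2.

Definition abs_tr (x : K) : K := \sum_(i < logn p #|K|) x ^+ (p ^ i).

Definition tr_nat (x : K) : nat :=
  odflt 0%N (omap val [pick m : 'I_p | (m%:R : K) == abs_tr x]).

Definition psi (x : K) : algC := zeta ^+ tr_nat x.

Variable s : nat.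

Definition W (u : K) : algC := \sum_(x : K) psi (x ^+ s - u * x).

Definition sinv : nat :=
  odflt 1%N (omap val [pick r : 'I_#|K| | (0 < r)%N && (s * r == 1 %[mod #|K|.-1])]).

Variable k : nat.
Variable t : 'I_k -> K.

Definition Q (a b : K) : nat :=
  #|[set v : {ffun 'I_k -> K} |
      (\sum_(i < k) t i * v i == a) && ((\sum_(i < k) v i ^+ s) ^+ sinv == b)]|.

End Defs.

(* the group algebra algC[K^x], elements are coefficient functions u |-> S_u *)
Definition galg (K : finFieldType) := {ffun {unit K} -> algC}.

(* product in the group algebra: ([v] * [w] = [v w]) *)
Definition galg_mul (K : finFieldType) (A B : galg K) : galg K :=
  [ffun u => \sum_(v : {unit K}) A v * B (v^-1 * u)%g].

Definition Wel (K : finFieldType) (p s : nat) : galg K :=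
  [ffun u : {unit K} => W p s (val u)].

Definition Wt (K : finFieldType) (p s k : nat) (t : 'I_k -> K) : galg K :=
  [ffun u : {unit K} => \prod_(i < k) W p s (t i * val u)].

Definition Vt (K : finFieldType) (s k : nat) (t : 'I_k -> K) : galg K :=
  [ffun u : {unit K} => (Q s t 1 (val u))%:R - (Q s t 1 0)%:R].

(* Expanding the product, W_{t_1 u} ... W_{t_k u} = sum_v psi(S v - u T v), where
   S v = sum_i v_i^s and T v = sum_i t_i v_i.  Every v with T v = y <> 0 is uniquely
   y w with T w = 1, and S (y w) = y^s S w.  Subtracting the same expansion at u = 0,
   where the product vanishes because sum_x psi(x^s) = sum_x psi(x) = 0, removes the
   contribution of T v = 0 and leaves sum_{T w = 1} (Wd (S w) u - q [S w = 0]) with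
   Wd d u = sum_y psi(y^s d - u y).  The coefficient of [u] in W V^[t] is
   sum_e W_{u/e} (Q_{1,e} - Q_{1,0}); the substitution y -> e y turns W_{u/e} into
   Wd (e^s) u, d = e^s ranges over K^x because gcd(s, q - 1) = 1, and the orthogonality
   relations of psi reduce the sum over d to the same expression. *)

From mathcomp Require Import all_boot all_order all_algebra all_fingroup all_field.
Set Implicit Arguments. Unset Strict Implicit. Unset Printing Implicit Defensive.
Import GRing.Theory Num.Theory.
Local Open Scope ring_scope.

Section PowerMap.
Variables (K : finFieldType) (s : nat).
Hypotheses (s_gt0 : (0 < s)%N) (s_coprime : coprime s #|K|.-1).

Local Notation m := #|K|.-1.

Lemma card_pred_gt0 : (0 < m)%N.
Proof. by rewrite -ltnS prednK ?finNzRing_gt1 // ltnW ?finNzRing_gt1. Qed.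

Lemma sinv_spec : (0 < sinv K s)%N /\ s * sinv K s = 1 %[mod m].
Proof.
rewrite /sinv; case: pickP => [r /andP[r_gt0 /eqP] | no_inv] //=.
have [a _] := Bezoutl m s_gt0; rewrite (eqnP s_coprime) => /dvdnP[b Eb].
have b_gt0 : (0 < b)%N by case: b Eb.
pose r := (b.-1 %% m).+1.
have r_lt : (r < #|K|)%N.
  by rewrite -[#|K|]prednK ?ltnS ?ltn_pmod ?card_pred_gt0 // ltnW ?finNzRing_gt1.
case/negP: (no_inv (Ordinal r_lt)) => /=.
rewrite /r -addn1 -modnMmr modnDml addn1 prednK // modnMmr mulnC -Eb.
by rewrite addnC modnMDl.
Qed.

Lemma expf_mod_card_pred (x : K) a : x != 0 -> x ^+ a = x ^+ (a %% m).
Proof.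
move=> x_neq0; rewrite expr_mod //; apply: (mulIf x_neq0).
by rewrite mul1r -exprSr prednK ?expf_card // ltnW ?finNzRing_gt1.
Qed.

Lemma exp_s_sinv (x : K) : x ^+ (s * sinv K s) = x.
Proof.
have [sinv_gt0 ssinv] := sinv_spec.
have [->|x_neq0] := eqVneq x 0; first by rewrite expr0n muln_eq0 !eqn0Ngt s_gt0 sinv_gt0.
by rewrite expf_mod_card_pred // ssinv -expf_mod_card_pred.
Qed.

Lemma exp_sK (x : K) : (x ^+ s) ^+ sinv K s = x.
Proof. by rewrite -exprM exp_s_sinv. Qed.

Lemma exp_sinvK (x : K) : (x ^+ sinv K s) ^+ s = x.
Proof. by rewrite -exprM mulnC exp_s_sinv. Qed.

Lemma exp_s_inj : injective (fun x : K => x ^+ s).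
Proof. exact: (@can_inj _ _ _ (fun y : K => y ^+ sinv K s) exp_sK). Qed.

Lemma eq_exp_sinv (y b : K) : (y ^+ sinv K s == b) = (y == b ^+ s).
Proof. by apply/eqP/eqP => [<-|->]; rewrite ?exp_sinvK ?exp_sK. Qed.

Lemma reindex_exp_s (R : nmodType) (P : pred K) (F : K -> R) :
  \sum_(x | P (x ^+ s)) F (x ^+ s) = \sum_(x | P x) F x.
Proof. by rewrite [RHS](reindex_inj exp_s_inj). Qed.

End PowerMap.

Section AdditiveCharacter.
Variables (K : finFieldType) (R : idomainType) (chi : K -> R).
Hypotheses (chiD : {morph chi : x y / x + y >-> x * y}) (chi0 : chi 0 = 1).
Hypothesis chi_nontrivial : exists x, chi x != 1.

Lemma chi_sum (I : finType) (f : I -> K) : chi (\sum_i f i) = \prod_i chi (f i).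
Proof. exact: big_morph. Qed.

Lemma sum_chi : \sum_(x : K) chi x = 0.
Proof.
have [a chi_a_neq1] := chi_nontrivial.
have shift : \sum_(x : K) chi x = chi a * \sum_(x : K) chi x.
  by rewrite {1}(reindex_inj (addrI a)) mulr_sumr; apply: eq_bigr => x _; rewrite chiD.
apply/eqP; move/eqP: shift; rewrite -subr_eq0 -{1}[\sum_x _]mul1r -mulrBl.
by rewrite mulf_eq0 subr_eq0 eq_sym (negPf chi_a_neq1).
Qed.

Lemma sum_chiM (c : K) : \sum_(x : K) chi (x * c) = (c == 0)%:R * #|K|%:R.
Proof.
have [->|c_neq0] := eqVneq c 0.
  by under eq_bigr do rewrite mulr0 chi0; rewrite sumr_const mul1r.
by rewrite mul0r -[RHS]sum_chi [RHS](reindex_inj (mulIf c_neq0)).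
Qed.

End AdditiveCharacter.

Lemma sum_units (R : nmodType) (K : finFieldType) (F : K -> R) :
  \sum_(w : {unit K}) F (val w) = \sum_(x | x != 0) F x.
Proof.
rewrite [RHS](reindex (fun w : {unit K} => val w)) /=.
  by apply: eq_bigl => w; rewrite -unitfE (valP w).
exists (insubd (1%g : {unit K})) => [w _ | x]; first exact: valKd.
by rewrite inE -unitfE => x_unit; rewrite insubdK.
Qed.

Section Convolution.
Variables (K : finFieldType) (R : idomainType) (chi : K -> R).
Hypotheses (chiD : {morph chi : x y / x + y >-> x * y}) (chi0 : chi 0 = 1).
Hypothesis chi_nontrivial : exists x, chi x != 1.
Variable s : nat.
Hypotheses (s_gt0 : (0 < s)%N) (s_coprime : coprime s #|K|.-1).
Variables (k : nat) (t : 'I_k -> K).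
Hypothesis k_gt0 : (0 < k)%N.

Local Notation q := (#|K|%:R : R).
Local Notation vec := {ffun 'I_k -> K}.

Definition Wchi (u : K) : R := \sum_(x : K) chi (x ^+ s - u * x).
Definition Wd (d u : K) : R := \sum_(y : K) chi (y ^+ s * d - u * y).

Definition lin (v : vec) : K := \sum_(i < k) t i * v i.
Definition pow_sum (v : vec) : K := \sum_(i < k) v i ^+ s.
Definition scale (c : K) (v : vec) : vec := [ffun i => c * v i].

Lemma lin_scale c v : lin (scale c v) = c * lin v.
Proof. by rewrite /lin mulr_sumr; apply: eq_bigr => i _; rewrite ffunE mulrCA. Qed.

Lemma pow_sum_scale c v : pow_sum (scale c v) = c ^+ s * pow_sum v.
Proof. by rewrite /pow_sum mulr_sumr; apply: eq_bigr => i _; rewrite ffunE exprMn. Qed.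

Lemma scale_inj c : c != 0 -> injective (scale c).
Proof.
move=> c_neq0 v w /ffunP vw; apply/ffunP => i.
by have := vw i; rewrite !ffunE => /(mulfI c_neq0).
Qed.

Lemma sum_lin_split (F : vec -> R) :
  \sum_v F v = \sum_(v | lin v == 0) F v
             + \sum_(v | lin v == 1) \sum_(y | y != 0) F (scale y v).
Proof.
rewrite (bigID (fun v => lin v == 0)) /=; congr (_ + _).
rewrite (partition_big lin (fun y => y != 0)) //= [RHS]exchange_big /=.
apply: eq_bigr => y y_neq0; rewrite (reindex_inj (scale_inj y_neq0)) /=.
apply: eq_bigl => v; rewrite lin_scale mulf_eq0 (negPf y_neq0) /=.
rewrite -{2}[y]mulr1 (inj_eq (mulfI y_neq0)).
by case: eqP => // ->; rewrite eq_sym oner_eq0.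
Qed.

Lemma prod_Wchi u :
  \prod_(i < k) Wchi (t i * u) = \sum_(v : vec) chi (pow_sum v - u * lin v).
Proof.
rewrite /Wchi bigA_distr_bigA /=; apply: eq_bigr => v _.
rewrite -chi_sum // /pow_sum /lin mulr_sumr -sumrB; congr chi.
by apply: eq_bigr => i _; rewrite mulrCA mulrA.
Qed.

Lemma Wchi0 : Wchi 0 = 0.
Proof.
rewrite /Wchi; under eq_bigr do rewrite mul0r subr0.
by rewrite (reindex_exp_s s_gt0 s_coprime xpredT chi) sum_chi.
Qed.

Lemma Wd_d0 d : Wd d 0 = (d == 0)%:R * q.
Proof.
rewrite /Wd; under eq_bigr do rewrite mul0r subr0.
by rewrite (reindex_exp_s s_gt0 s_coprime xpredT (fun y => chi (y * d))) sum_chiM.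
Qed.

Lemma sum_nz_Wd d u : \sum_(y | y != 0) chi (y ^+ s * d - u * y) = Wd d u - 1.
Proof.
by rewrite /Wd [in RHS](bigD1 0) //= expr0n gtn_eqF // !(mul0r, mulr0) subr0 chi0 addrC addrK.
Qed.

Lemma prod_Wchi_lin1 u :
  \prod_(i < k) Wchi (t i * u)
  = \sum_(v | lin v == 1) (Wd (pow_sum v) u - (pow_sum v == 0)%:R * q).
Proof.
have split_prod w : \prod_(i < k) Wchi (t i * w)
    = \sum_(v | lin v == 0) chi (pow_sum v) + \sum_(v | lin v == 1) (Wd (pow_sum v) w - 1).
  rewrite prod_Wchi sum_lin_split; congr (_ + _).
    by apply: eq_bigr => v /eqP ->; rewrite mulr0 subr0.
  apply: eq_bigr => v /eqP lin1; rewrite -sum_nz_Wd; apply: eq_bigr => y _.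
  by rewrite pow_sum_scale lin_scale lin1 mulr1.
have prod0 : \prod_(i < k) Wchi (t i * 0) = 0.
  by rewrite (bigD1 (Ordinal k_gt0)) //= mulr0 Wchi0 mul0r.
rewrite -[LHS]subr0 -[X in _ - X]prod0 !split_prod opprD addrACA subrr add0r -sumrB.
by apply: eq_bigr => v _; rewrite Wd_d0 opprB addrA subrK.
Qed.

Lemma Wd_0u u : u != 0 -> Wd 0 u = 0.
Proof.
move=> u_neq0; rewrite /Wd; under eq_bigr do rewrite mulr0 sub0r -mulNr mulrC.
by rewrite sum_chiM // oppr_eq0 (negPf u_neq0) mul0r.
Qed.

Lemma sum_nz_Wd_d u : u != 0 -> \sum_(d | d != 0) Wd d u = q.
Proof.
move=> u_neq0; transitivity (\sum_(d : K) Wd d u).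
  by rewrite [RHS](bigD1 0) //= Wd_0u // add0r.
rewrite /Wd exchange_big /= (bigD1 0) //= [X in _ + X]big1 ?addr0 => [|y y_neq0].
  by under eq_bigr do rewrite expr0n gtn_eqF // !(mul0r, mulr0) subr0 chi0; rewrite sumr_const.
under eq_bigr do rewrite chiD [_ ^+ s * _]mulrC.
by rewrite -mulr_suml sum_chiM // expf_eq0 s_gt0 (negPf y_neq0) !mul0r.
Qed.

Lemma sum_nz_Wd_delta z u : u != 0 ->
  \sum_(d | d != 0) Wd d u * ((z == d)%:R - (z == 0)%:R) = Wd z u - (z == 0)%:R * q.
Proof.
move=> u_neq0; have [->|z_neq0] := eqVneq z 0.
  rewrite Wd_0u // sub0r mul1r -(sum_nz_Wd_d u_neq0) -sumrN.
  apply: eq_bigr => d d_neq0.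
  by rewrite eq_sym (negPf d_neq0) sub0r mulrN1.
rewrite mul0r subr0 (bigD1 z) //= eqxx subr0 mulr1 big1 ?addr0 // => d /andP[_ d_neq_z].
by rewrite [z == d]eq_sym (negPf d_neq_z) subrr mulr0.
Qed.

Lemma Q_sum b :
  (Q s t 1 b)%:R = \sum_(v | lin v == 1) (pow_sum v == b ^+ s)%:R :> R.
Proof.
rewrite /Q -sum1dep_card natr_sum big_mkcond [RHS]big_mkcond.
apply: eq_bigr => v _; rewrite -/(lin v) -/(pow_sum v) eq_exp_sinv //.
by case: (lin v == 1); case: (pow_sum v == b ^+ s).
Qed.

Lemma Wchi_div u e : e != 0 -> Wchi (u / e) = Wd (e ^+ s) u.
Proof.
move=> e_neq0; rewrite /Wchi (reindex_inj (mulfI e_neq0)) /=.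
by apply: eq_bigr => y _; rewrite mulrA divfK // exprMn [e ^+ s * _]mulrC.
Qed.

Lemma conv_Wchi_Q u : u != 0 ->
  \sum_(w | w != 0) Wchi w * ((Q s t 1 (w^-1 * u))%:R - (Q s t 1 0)%:R)
  = \sum_(v | lin v == 1) (Wd (pow_sum v) u - (pow_sum v == 0)%:R * q).
Proof.
move=> u_neq0; have div_inj : injective (fun e : K => u / e).
  by move=> a b /(mulfI u_neq0) /invr_inj.
rewrite (reindex_inj div_inj) /=.
transitivity (\sum_(v | lin v == 1) \sum_(e | e != 0)
    Wd (e ^+ s) u * ((pow_sum v == e ^+ s)%:R - (pow_sum v == 0)%:R)).
  rewrite exchange_big /=; apply: eq_big => [e | e e_neq0].
    by rewrite mulf_eq0 invr_eq0 (negPf u_neq0).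
  have {}e_neq0 : e != 0 by apply: contraNneq e_neq0 => ->; rewrite invr0 mulr0.
  rewrite Wchi_div // invf_div divfK // (Q_sum e) (Q_sum 0) expr0n gtn_eqF //.
  by rewrite -sumrB mulr_sumr.
apply: eq_bigr => v _; rewrite -sum_nz_Wd_delta //.
pose F d := Wd d u * ((pow_sum v == d)%:R - (pow_sum v == 0)%:R).
rewrite -[RHS](reindex_exp_s s_gt0 s_coprime (fun d => d != 0) F).
by apply: eq_bigl => e; rewrite expf_eq0 s_gt0.
Qed.

Lemma prod_Wchi_conv u : u != 0 ->
  \prod_(i < k) Wchi (t i * u)
  = \sum_(w | w != 0) Wchi w * ((Q s t 1 (w^-1 * u))%:R - (Q s t 1 0)%:R).
Proof. by move=> u_neq0; rewrite prod_Wchi_lin1 conv_Wchi_Q. Qed.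

End Convolution.

Section Zeta.
Variable p : nat.
Hypothesis p_gt1 : (1 < p)%N.

Lemma zetaXp : zeta p ^+ p = 1.
Proof. by rewrite /zeta -exprM mulnC exprM rootCK ?(ltnW p_gt1) // sqrrN expr1n. Qed.

Lemma zeta_neq1 : zeta p != 1.
Proof.
rewrite /zeta sqrf_eq1 negb_or; set r := p.-root (-1).
have rXp : r ^+ p = -1 by rewrite rootCK ?(ltnW p_gt1).
apply/andP; split.
  apply/eqP => r1; move: rXp; rewrite r1 expr1n => /eqP.
  by rewrite -subr_eq0 opprK -(natrD _ 1 1) pnatr_eq0.
by apply/eqP => rN1; have := rootC_lt0 (-1 : algC) p_gt1; rewrite -/r rN1 ltrN10.
Qed.

End Zeta.

Section AbsoluteTrace.
Variables (K : finFieldType) (p : nat).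
Hypothesis pcharKp : p \in [pchar K].

Local Notation n := (logn p #|K|).
Let p_prime : prime p := pcharf_prime pcharKp.
Let p_gt1 : (1 < p)%N := prime_gt1 p_prime.

Lemma card_pchar : #|K| = (p ^ n)%N.
Proof. exact: card_pprimeChar pcharKp. Qed.

Lemma logn_card_gt0 : (0 < n)%N.
Proof. by rewrite lt0n; apply: contraTneq (finNzRing_gt1 K) => n0; rewrite card_pchar n0. Qed.

Lemma exprD_pchar_exp (x y : K) i : (x + y) ^+ (p ^ i) = x ^+ (p ^ i) + y ^+ (p ^ i).
Proof. by apply: exprDn_pchar; rewrite (eq_pnat _ (pcharf_eq pcharKp)) pnatX pnat_id. Qed.

Lemma abs_trD : {morph @abs_tr K p : x y / x + y}.
Proof.
by move=> x y; rewrite /abs_tr -big_split; apply: eq_bigr => i _; rewrite exprD_pchar_exp.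
Qed.

Lemma abs_tr0 : abs_tr p (0 : K) = 0.
Proof. by apply: (addrI (abs_tr p 0)); rewrite -abs_trD !addr0. Qed.

Lemma abs_trXp (x : K) : abs_tr p x ^+ p = abs_tr p x.
Proof.
rewrite /abs_tr -(pFrobenius_autE pcharKp) rmorph_sum /=.
under eq_bigr do rewrite (pFrobenius_autE pcharKp) -exprM -expnSr.
have x_fixed : x ^+ (p ^ n) = x by rewrite -card_pchar expf_card.
move: x_fixed logn_card_gt0; case: n => // m x_fixed _.
by rewrite big_ord_recr big_ord_recl /= expn0 expr1 addrC x_fixed.
Qed.

Lemma abs_trZ (c x : K) : c ^+ p = c -> abs_tr p (c * x) = c * abs_tr p x.
Proof.
move=> c_fixed; have cXp i : c ^+ (p ^ i) = c.
  by elim: i => [|i IHi]; rewrite ?expn0 ?expr1 // expnSr exprM IHi c_fixed.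
by rewrite /abs_tr mulr_sumr; apply: eq_bigr => i _; rewrite exprMn cXp.
Qed.

Lemma abs_tr_neq0 : exists x : K, abs_tr p x != 0.
Proof.
apply/existsP; apply: contraT => /existsPn tr0.
pose P : {poly K} := \sum_(i < n) 'X^(p ^ i).
have P_coef1 : P`_1 = 1.
  rewrite coef_sum (bigD1 (Ordinal logn_card_gt0)) //= coefXn expn0 eqxx.
  rewrite big1 ?addr0 // => i i_neq0; rewrite coefXn -{1}(expn0 p) eqn_exp2l //.
  by rewrite eq_sym -[i == _ :> nat]/(i == Ordinal logn_card_gt0) (negPf i_neq0).
have P_neq0 : P != 0.
  by apply/eqP => P0; move: P_coef1; rewrite P0 coef0 => /eqP; rewrite eq_sym oner_eq0.
have P_roots : all (root P) (enum K).
  apply/allP => x _; rewrite rootE horner_sum.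
  under eq_bigr do rewrite hornerXn; exact: negbNE (tr0 x).
have P_size : (size P <= #|K|)%N.
  apply: leq_trans (size_sum _ _ _) _; apply/bigmax_leqP => i _.
  rewrite size_polyXn (leq_trans _ (eq_leq (esym card_pchar))) //.
  by rewrite ltn_exp2l.
by have := max_poly_roots P_neq0 P_roots (enum_uniq _); rewrite -cardE ltnNge P_size.
Qed.

Lemma eq_mod_natr (a b : nat) : (a%:R : K) = b%:R -> a = b %[mod p].
Proof.
wlog le_ab : a b / (a <= b)%N => [hwlog|] ab.
  by case: (leqP a b) => [|/ltnW] le; [|symmetry]; apply: hwlog.
by apply/eqP; rewrite eq_sym eqn_mod_dvd // (dvdn_pcharf pcharKp) natrB // ab subrr.
Qed.

Lemma natr_inj_lt (a b : nat) : (a < p)%N -> (b < p)%N -> (a%:R : K) = b%:R -> a = b.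
Proof. by move=> a_lt b_lt /eq_mod_natr; rewrite !modn_small. Qed.

Lemma frobenius_fixed_nat (y : K) : y ^+ p = y -> exists m : 'I_p, m%:R = y.
Proof.
move=> y_fixed; suff /existsP[m /eqP m_y] : [exists m : 'I_p, (m%:R : K) == y] by exists m.
apply: contraT => /existsPn y_new.
pose P : {poly K} := 'X^p - 'X.
have size_P : size P = p.+1 by rewrite size_polyDl ?size_polyXn ?size_polyN ?size_polyX.
have P_neq0 : P != 0 by rewrite -size_poly_eq0 size_P.
have root_P z : z ^+ p = z -> root P z by rewrite rootE !hornerE => ->; rewrite subrr.
have := max_poly_roots P_neq0 (rs := y :: [seq (i%:R : K) | i <- iota 0 p]).
rewrite size_P /= size_map size_iota ltnn; apply.
  rewrite /= root_P //=; apply/allP => _ /mapP[i _ ->]; apply: root_P.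
  by rewrite -(pFrobenius_autE pcharKp) pFrobenius_aut_nat.
rewrite /= map_inj_in_uniq ?iota_uniq ?andbT => [|a b]; last first.
  by rewrite !mem_iota !add0n; exact: natr_inj_lt.
apply/mapP => -[i]; rewrite mem_iota add0n => i_lt y_i.
by have := y_new (Ordinal i_lt); rewrite -y_i eqxx.
Qed.

Lemma tr_nat_spec (x : K) : (tr_nat p x < p)%N /\ (tr_nat p x)%:R = abs_tr p x.
Proof.
rewrite /tr_nat; case: pickP => [m /eqP m_tr | no_m] /=; first by [].
by have [m m_tr] := frobenius_fixed_nat (abs_trXp x); move: (no_m m); rewrite m_tr eqxx.
Qed.

Lemma psiD : {morph @psi K p : x y / x + y >-> x * y}.
Proof.
move=> x y; rewrite /psi -exprD -(expr_mod _ (zetaXp p_gt1)).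
rewrite -[in RHS](expr_mod _ (zetaXp p_gt1)); congr (_ ^+ _); apply: eq_mod_natr.
by rewrite natrD !(tr_nat_spec _).2 abs_trD.
Qed.

Lemma psi0 : psi p (0 : K) = 1.
Proof.
have [tr_lt tr_eq] := tr_nat_spec 0; rewrite abs_tr0 -[0](mulr0n 1) in tr_eq.
by rewrite /psi (natr_inj_lt tr_lt (prime_gt0 p_prime) tr_eq) expr0.
Qed.

Lemma psi_nontrivial : exists x : K, psi p x != 1.
Proof.
have [x0 tr_x0_neq0] := abs_tr_neq0; exists ((abs_tr p x0)^-1 * x0).
have [tr_lt] := tr_nat_spec ((abs_tr p x0)^-1 * x0).
rewrite abs_trZ ?mulVf ?exprVn ?abs_trXp // -[1](mulr1n 1) => /(natr_inj_lt tr_lt p_gt1).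
by rewrite /psi => ->; rewrite expr1 zeta_neq1.
Qed.

End AbsoluteTrace.

Theorem proposition5p13 (K : finFieldType) (p : nat) (hp : p \in [pchar K])
  (s : nat) (hs : (0 < s)%N) (hcop : coprime s #|K|.-1)
  (k : nat) (hk : (0 < k)%N) (t : 'I_k -> K) (ht : forall i, t i != 0) :
  Wt p s t = galg_mul (Wel K p s) (Vt s t).
Proof.
apply/ffunP => u; have u_neq0 : val u != 0 by rewrite -unitfE (valP u).
rewrite !ffunE (prod_Wchi_conv (psiD hp) (psi0 hp) (psi_nontrivial hp) hs hcop t hk u_neq0).
rewrite -sum_units; apply: eq_bigr => w _.
by rewrite !ffunE FinRing.val_unitM FinRing.val_unitV.
Qed.
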